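(* Let $\pi,\rho\in S_k$. Then: (1) $\kappa^\rho_\pi(\mathbf w)$ is a rational function with at most simple poles at $w_i=w_j$ ($i<j$) and no other singularities; i.e. $\prod_{i<j}(w_j-w_i)\kappa^\rho_\pi(\mathbf w)$ is a polynomial in $w_1,\dots,w_k$. (2) If $a<b$ and $\rho^{-1}(a)>\rho^{-1}(b)$, then $\kappa^\rho_\pi(\mathbf w)|_{w_a=z,\,w_b=qz}=0$. (3) If $\pi(\rho^{-1}(a))<a$ then $\kappa^\rho_\pi(\mathbf w)|_{w_a=0}=0$; if $\pi(\rho^{-1}(a))>a$ then $\kappa^\rho_\pi(\mathbf w)|_{w_a\to\infty}=0$.
   Context: $q$ is a fixed parameter (in $(0,1)$). For $\rho\in S_k$, $t_\rho f(w_1,\dots,w_k)=f(w_{\rho(1)},\dots,w_{\rho(k)})$; $T_i=q+\frac{w_{i+1}-qw_i}{w_{i+1}-w_i}(t_{\sigma_i}-1)$ where $\sigma_i$ is the transposition of $i,i+1$; $T_\pi=T_{i_1}\cdots T_{i_l}$ for a reduced word $\pi=\sigma_{i_1}\cdots\sigma_{i_l}$. The rational functions $\kappa^\rho_\pi(\mathbf w)$ are defined by $T_\pi=\sum_{\rho\in S_k}\kappa^\rho_\pi(\mathbf w)t_\rho$. *)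

From HB Require Import structures.
From mathcomp Require Import all_boot all_order all_algebra all_fingroup.
From mathcomp Require Export mpoly.
Set Implicit Arguments. Unset Strict Implicit. Unset Printing Implicit Defensive.
Import Order.TTheory GRing.Theory Num.Theory.
Local Open Scope ring_scope.

(* Points w = (w_1,...,w_k) are functions 'I_k -> R (indices shifted to 0..k-1). *)

(* An operator sum_rho c_rho(w) t_rho, stored by its coefficient functions. *)
Definition op (k : nat) (R : Type) := 'S_k -> ('I_k -> R) -> R.

Section Ops.
Variables (R : fieldType) (k : nat).

(* (t_rho f)(w) = f(w_{rho(1)},...,w_{rho(k)}) = f (w \o rho). *)
Definition permpt (rho : 'S_k) (w : 'I_k -> R) : 'I_k -> R := fun j => w (rho j).

Definition opid : op k R := fun rho _ => if rho == 1%g then 1 else 0.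

(* composition: (a t_rho)(b t_sig) = a (t_rho b) t_(rho o sig);
   coefficient of t_tau collects rho o sig = tau, i.e. sig = rho^-1 o tau,
   which in MathComp's (left-to-right) perm product is tau * rho^-1. *)
Definition opmul (A B : op k R) : op k R := fun tau w =>
  \sum_(rho : 'S_k) A rho w * B (tau * rho^-1)%g (permpt rho w).

(* i+1 as an element of 'I_k (meaningful when i.+1 < k) *)
Definition nxt (i : 'I_k) : 'I_k := insubd i i.+1.

Definition sigma (i : 'I_k) : 'S_k := tperm i (nxt i).

(* T_i = q + (w_{i+1} - q w_i)/(w_{i+1} - w_i) (t_{sigma_i} - 1) *)
Definition Tcoef (q : R) (i : 'I_k) (w : 'I_k -> R) : R :=
  (w (nxt i) - q * w i) / (w (nxt i) - w i).

Definition Top (q : R) (i : 'I_k) : op k R := fun rho w =>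
  if rho == 1%g then q - Tcoef q i w
  else if rho == sigma i then Tcoef q i w else 0.

(* product of a word [i1; ...; il] as the composition sigma_i1 o ... o sigma_il
   (composition g o f is f * g in MathComp) *)
Definition word_perm (s : seq 'I_k) : 'S_k :=
  foldr (fun i p => (p * sigma i)%g) 1%g s.

Definition valid_word (s : seq 'I_k) : bool := all (fun i : 'I_k => (i.+1 < k)%N) s.

Definition reduced_word (s : seq 'I_k) (pi : 'S_k) : Prop :=
  [/\ valid_word s, word_perm s = pi &
      forall s', valid_word s' -> word_perm s' = pi -> (size s <= size s')%N].

Definition Tword (q : R) (s : seq 'I_k) : op k R :=
  foldr (fun i A => opmul (Top q i) A) opid s.

(* kappa^rho_pi(w), computed from a reduced word s of pi *)
Definition kappa (q : R) (s : seq 'I_k) (rho : 'S_k) (w : 'I_k -> R) : R :=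
  Tword q s rho w.

Definition generic (w : 'I_k -> R) : Prop := forall i j, i != j -> w i != w j.

Definition vdm (w : 'I_k -> R) : R :=
  \prod_(i : 'I_k) \prod_(j : 'I_k | (i < j)%N) (w j - w i).

Definition upd (w : 'I_k -> R) (a : 'I_k) (t : R) : 'I_k -> R :=
  fun j => if j == a then t else w j.

End Ops.

From HB Require Import structures.
From mathcomp Require Import all_boot all_order all_algebra all_fingroup.
From mathcomp Require Import mpoly.
From mathcomp Require Import ring lra zify.
From Stdlib Require Import FunctionalExtensionality.
Set Implicit Arguments. Unset Strict Implicit. Unset Printing Implicit Defensive.
Import Order.TTheory GRing.Theory Num.Theory.
Local Open Scope ring_scope.

(* Everything goes by induction along the word, appending letters on the right:
   T_(s i) = T_s T_i, so the coefficient of t_tau in T_(s i) combines those of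
   t_tau and t_(sigma_i tau) in T_s, with the weights of T_i read at w o tau.
   (1) The numerators P_tau = prod_(i<j) (w_j - w_i) kappa^tau stay polynomial
   because P_rho + P_(rho (m n)) vanishes on w_m = w_n (there t_rho and
   t_(rho (m n)) agree), an invariant which makes the new denominator
   w_(tau (i+1)) - w_(tau i) divide P_tau + P_(sigma_i tau).
   (2), (3) In a reduced word the appended letter is an ascent of the prefix
   (the length is the number of inversions), so the hypothesis on rho passes to
   the terms of the recursion, except for one term whose weight vanishes at the
   point, or in the limit, considered. *)

Section Operators.
Variables (R : fieldType) (k : nat).
Implicit Types (A B C : op k R) (q : R) (s : seq 'I_k) (i : 'I_k) (tau : 'S_k).
Implicit Types (w : 'I_k -> R).

Lemma permptM (r p : 'S_k) w : permpt p (permpt r w) = permpt (p * r)%g w.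
Proof. by apply: functional_extensionality => j; rewrite /permpt permM. Qed.

Lemma permpt1 w : permpt 1%g w = w.
Proof. by apply: functional_extensionality => j; rewrite /permpt perm1. Qed.

Lemma opmulA A B C : opmul A (opmul B C) = opmul (opmul A B) C.
Proof.
apply: functional_extensionality => tau; apply: functional_extensionality => w.
rewrite /opmul; under eq_bigr do rewrite big_distrr /=.
under [RHS]eq_bigr do rewrite big_distrl /=.
rewrite [RHS]exchange_big /=; apply: eq_bigr => r _.
rewrite [RHS](reindex_inj (mulIg r)) /=; apply: eq_bigr => p _.
by rewrite mulgK invMg !mulgA permptM mulrA.
Qed.

Lemma opmul1 A : opmul A (@opid R k) = A.
Proof.
apply: functional_extensionality => tau; apply: functional_extensionality => w.
rewrite /opmul (bigD1 tau) //= big1 ?addr0 => [|r r_tau].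
  by rewrite /opid mulgV eqxx mulr1.
by rewrite /opid -eq_mulgV1 eq_sym (negbTE r_tau) mulr0.
Qed.

Lemma op1mul A : opmul (@opid R k) A = A.
Proof.
apply: functional_extensionality => tau; apply: functional_extensionality => w.
rewrite /opmul (bigD1 1%g) //= big1 ?addr0 => [|r r1].
  by rewrite /opid eqxx mul1r invg1 mulg1 permpt1.
by rewrite /opid (negbTE r1) mul0r.
Qed.

Lemma Tword_rcons q s i : Tword q (rcons s i) = opmul (Tword q s) (Top q i).
Proof.
by elim: s => [|j s IHs] /=; [rewrite opmul1 op1mul | rewrite IHs opmulA].
Qed.

Lemma word_perm_rcons s i : word_perm (rcons s i) = (sigma i * word_perm s)%g.
Proof. by elim: s => [|j s IHs] /=; [rewrite mul1g mulg1 | rewrite IHs mulgA]. Qed.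

Lemma valid_word_rcons s i : valid_word (rcons s i) = valid_word s && (i.+1 < k)%N.
Proof. by rewrite /valid_word all_rcons andbC. Qed.

Lemma nxtE i : (i.+1 < k)%N -> val (nxt i) = i.+1.
Proof. by move=> ik; rewrite /nxt val_insubd ik. Qed.

Lemma nxt_neq i : (i.+1 < k)%N -> nxt i != i.
Proof. by move=> ik; rewrite -val_eqE nxtE //= neq_ltn ltnSn orbT. Qed.

Lemma sigmaL i : sigma i i = nxt i.
Proof. exact: tpermL. Qed.

Lemma sigmaR i : sigma i (nxt i) = i.
Proof. exact: tpermR. Qed.

Lemma sigmaV i : ((sigma i)^-1 = sigma i)%g.
Proof. exact: tpermV. Qed.

Lemma sigmaK i : (sigma i * sigma i = 1)%g.
Proof. exact: tperm2. Qed.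

Lemma sigma_neq1 i : (i.+1 < k)%N -> sigma i != 1%g.
Proof.
move=> ik; apply: contra (nxt_neq ik) => /eqP/(congr1 (fun p : 'S_k => p i)).
by rewrite sigmaL perm1 => ->.
Qed.

Lemma sigma_val i j : (i.+1 < k)%N ->
  (sigma i j : nat) = if (j : nat) == i then i.+1 else if (j : nat) == i.+1 then i else j.
Proof.
move=> ik; rewrite /sigma -(nxtE ik); case: tpermP => [->|->|/eqP ji /eqP jn].
- by rewrite eqxx.
- by rewrite val_eqE (negbTE (nxt_neq ik)) eqxx.
- by rewrite !val_eqE (negbTE ji) (negbTE jn).
Qed.

Lemma sigma_conj i tau : (sigma i * tau = tau * tperm (tau (nxt i)) (tau i))%g.
Proof. by rewrite tpermC -tpermJ conjgE mulgA mulgV mul1g. Qed.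

Lemma invV_sigma i tau x : ((sigma i * tau)^-1)%g x = sigma i ((tau^-1)%g x).
Proof. by rewrite invMg permM sigmaV. Qed.

Lemma kappa_rcons q s i tau w : (i.+1 < k)%N ->
  kappa q (rcons s i) tau w =
  kappa q s tau w * (q - (w (tau (nxt i)) - q * w (tau i)) / (w (tau (nxt i)) - w (tau i))) +
  kappa q s (sigma i * tau)%g w * ((w (tau i) - q * w (tau (nxt i))) / (w (tau i) - w (tau (nxt i)))).
Proof.
move=> ik; rewrite /kappa Tword_rcons /opmul (bigD1 tau) //= (bigD1 (sigma i * tau)%g) /=.
- rewrite big1 ?addr0 => [|r /andP[r_tau r_stau]].
    rewrite mulgV invMg mulgA mulgV mul1g sigmaV /Top eqxx (negbTE (sigma_neq1 ik)) eqxx.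
    by rewrite /Tcoef /permpt !permM sigmaL sigmaR.
  rewrite /Top -eq_mulgV1 eq_sym (negbTE r_tau).
  suff -> : (tau * r^-1 == sigma i)%g = false by rewrite mulr0.
  apply: contraNF r_stau => /eqP e.
  by rewrite -sigmaV -e invMg invgK -mulgA mulVg mulg1.
- apply: contra (sigma_neq1 ik) => /eqP/(congr1 (fun p => p * tau^-1)%g).
  by rewrite mulgK mulgV => ->.
Qed.

End Operators.

Section ReducedWords.
Variable k : nat.
Implicit Types (p : 'S_k) (s : seq 'I_k) (i j l : 'I_k).

Definition inversions p : nat :=
  (\sum_(j : 'I_k) \sum_(l : 'I_k) ((j < l)%N && (p l < p j)%N))%N.

Definition reducedb s := valid_word s && (size s == inversions (word_perm s)).

Lemma inversions1 : inversions 1%g = 0%N.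
Proof.
by rewrite /inversions big1 // => j _; rewrite big1 // => l _; rewrite !perm1; case: ltngtP.
Qed.

Lemma ltn_sigma i j l : (i.+1 < k)%N ->
  ~~ [&& (j : nat) == i & (l : nat) == i.+1] -> ~~ [&& (j : nat) == i.+1 & (l : nat) == i] ->
  (j < l)%N = (sigma i j < sigma i l)%N.
Proof.
move=> ik; rewrite !sigma_val // => not_up not_down.
by apply/idP/idP; move: not_up not_down; repeat case: ifP => /eqP ?; rewrite /=; lia.
Qed.

(* Precomposing with sigma_i only toggles the pair (i, i+1). *)
Lemma inversions_sigma p i : (i.+1 < k)%N ->
  (inversions (sigma i * p)%g + (p (nxt i) < p i)%N = inversions p + (p i < p (nxt i)))%N.
Proof.
move=> ik; have ni := nxtE ik; rewrite /inversions.
rewrite [in RHS](reindex_inj (@perm_inj _ (sigma i))) /=.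
under [in RHS]eq_bigr do rewrite (reindex_inj (@perm_inj _ (sigma i))) /=.
have ni_i : (nxt i, i) != (i, nxt i) by rewrite xpair_eqE (negbTE (nxt_neq ik)).
rewrite !pair_bigA /= (bigD1 (i, nxt i)) //= (bigD1 (nxt i, i)) //=.
rewrite [in RHS](bigD1 (i, nxt i)) //= [in RHS](bigD1 (nxt i, i)) //=.
rewrite !permM sigmaL sigmaR ni ltnSn [(i.+1 < i)%N]ltnNge leqnSn /=.
set lhs := (\sum_(x | _) _)%N; set rhs := (\sum_(x | _) _)%N.
suff -> : lhs = rhs by set a := nat_of_bool _; set b := nat_of_bool _; lia.
apply: eq_bigr => -[j l] /andP[/= jl lj]; rewrite !permM; congr (_ && _).
apply: ltn_sigma => //.
- by move: jl; rewrite xpair_eqE -!val_eqE /= ni.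
- by move: lj; rewrite xpair_eqE -!val_eqE /= ni andbC.
Qed.

Lemma inversions_word_le s : valid_word s -> (inversions (word_perm s) <= size s)%N.
Proof.
elim/last_ind: s => [|s i IHs]; first by rewrite inversions1.
rewrite valid_word_rcons word_perm_rcons size_rcons => /andP[/IHs le_s ik].
have := inversions_sigma (word_perm s) ik.
by case: (_ < _)%N; case: (_ < _)%N => /=; lia.
Qed.

Lemma perm_increasing_eq1 p :
  (forall i, (i.+1 < k)%N -> (p i < p (nxt i))%N) -> p = 1%g.
Proof.
move=> incr; have le_p n j : (j : nat) = n -> (n <= p j)%N.
  elim: n j => // n IHn j jn; have nk : (n < k)%N by rewrite -jn ltnW.
  have ik : ((Ordinal nk).+1 < k)%N by rewrite /= -jn.
  have <- : nxt (Ordinal nk) = j by apply: val_inj; rewrite nxtE.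
  exact: leq_ltn_trans (IHn (Ordinal nk) erefl) (incr _ ik).
have sum_p : (\sum_(j : 'I_k) (j : nat) = \sum_(j : 'I_k) (p j : nat))%N.
  by rewrite (reindex_inj (@perm_inj _ p)).
have [_] := @leqif_sum _ xpredT _ _ _ (fun j _ => leqif_eq (le_p j j erefl)).
rewrite sum_p eqxx => /esym/forallP p_id.
by apply/permP => j; rewrite perm1; apply/val_inj/esym/eqP/p_id.
Qed.

Lemma word_of_inversions p :
  exists s, [/\ valid_word s, word_perm s = p & size s = inversions p].
Proof.
move: {2}(inversions p) (erefl (inversions p)) => n; elim: n p => [|n IHn] p inv_p.
  have [-> | p1] := eqVneq p 1%g; first by exists [::]; rewrite inversions1.
  suff : p = 1%g by move/eqP: p1.
  apply: perm_increasing_eq1 => i ik; have := inversions_sigma p ik.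
  have : p i != p (nxt i) by rewrite (inj_eq perm_inj) eq_sym nxt_neq.
  rewrite inv_p; case: ltngtP => //= [_ _|/val_inj ->]; [by rewrite addn1 | by rewrite eqxx].
have [p1 | p_ne1] := eqVneq p 1%g; first by rewrite p1 inversions1 in inv_p.
have [i ik descent] : exists2 i : 'I_k, (i.+1 < k)%N & (p (nxt i) < p i)%N.
  apply/exists_inP; apply: contra_neqT p_ne1 => /exists_inPn no_descent.
  apply: perm_increasing_eq1 => i ik; have := no_descent i ik; rewrite -leqNgt leq_eqVlt.
  by rewrite val_eqE (inj_eq perm_inj) eq_sym (negbTE (nxt_neq ik)).
have p_sigma : (sigma i * (sigma i * p) = p)%g by rewrite mulgA sigmaK mul1g.
have := inversions_sigma (sigma i * p)%g ik.
rewrite p_sigma !permM sigmaL sigmaR descent (ltnNge (p i)) (ltnW descent) inv_p.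
rewrite /= addn0 addn1 => /eqP; rewrite eqSS => /eqP inv_sp.
have [s [s_valid s_p s_size]] := IHn _ (esym inv_sp).
exists (rcons s i); split; last by rewrite size_rcons s_size -inv_sp.
- by rewrite valid_word_rcons s_valid ik.
- by rewrite word_perm_rcons s_p p_sigma.
Qed.

Lemma reduced_word_reducedb s p : reduced_word s p -> reducedb s.
Proof.
case=> s_valid <- s_min; have [s' [s'_valid s'_p s'_size]] := word_of_inversions (word_perm s).
rewrite /reducedb s_valid eqn_leq inversions_word_le // andbT.
by rewrite -s'_size s_min.
Qed.

Lemma reducedb_rcons s i : reducedb (rcons s i) ->
  [/\ reducedb s, (i.+1 < k)%N & (word_perm s i < word_perm s (nxt i))%N].
Proof.
rewrite /reducedb valid_word_rcons size_rcons word_perm_rcons.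
move=> /andP[/andP[s_valid ik] /eqP size_eq].
have := inversions_sigma (word_perm s) ik; have := inversions_word_le s_valid.
have : word_perm s i != word_perm s (nxt i) by rewrite (inj_eq perm_inj) eq_sym nxt_neq.
rewrite s_valid ik -size_eq; case: ltngtP => [_|_|/val_inj ->] /=; last by rewrite eqxx.
- by move=> _ le_s; lia.
- by move=> _ le_s size_s; split=> //; apply/eqP; lia.
Qed.

End ReducedWords.

Section FiniteVanishing.
Variables (R : fieldType) (k : nat) (q : R).
Implicit Types (s : seq 'I_k) (tau : 'S_k) (w : 'I_k -> R).

Lemma kappa_nil tau w : kappa q [::] tau w = (tau == 1%g)%:R.
Proof. by rewrite /kappa /= /opid; case: eqP. Qed.

(* The only term escaping the induction hypothesis is the one where sigma_i
   swaps the inverted pair (tau i, tau (i+1)) = (b, a); its weight has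
   numerator w_b - q w_a = 0. *)
Lemma kappa_vanish_qline s tau (a b : 'I_k) w : valid_word s ->
  (a < b)%N -> ((tau^-1)%g b < (tau^-1)%g a)%N -> w b = q * w a -> kappa q s tau w = 0.
Proof.
move=> + ab + wb; elim/last_ind: s tau => [|s i IHs] tau.
  move=> _ tau_inv; rewrite kappa_nil; case: eqP => // tau1.
  by move: tau_inv; rewrite tau1 invg1 !perm1 ltnNge ltnW.
rewrite valid_word_rcons => /andP[s_valid ik] tau_inv.
rewrite kappa_rcons // IHs // mul0r add0r.
have [/andP[/eqP tb /eqP ta] | not_ba] :=
  boolP [&& ((tau^-1)%g b : nat) == i & ((tau^-1)%g a : nat) == i.+1].
  have -> : tau i = b by rewrite -[b](permKV tau); congr (tau _); apply: val_inj.
  have -> : tau (nxt i) = a.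
    by rewrite -[a](permKV tau); congr (tau _); apply: val_inj; rewrite nxtE.
  by rewrite wb subrr mul0r mulr0.
rewrite IHs ?mul0r // !invV_sigma -ltn_sigma //.
by apply: contraTN tau_inv => /andP[/eqP -> /eqP ->]; rewrite ltnNge leqnSn.
Qed.

Lemma kappa_vanish_zero s tau (a : 'I_k) w : reducedb s -> generic w ->
  (word_perm s ((tau^-1)%g a) < a)%N -> w a = 0 -> kappa q s tau w = 0.
Proof.
move=> + w_gen + wa; elim/last_ind: s tau => [|s i IHs] tau.
  by move=> _; rewrite kappa_nil perm1; case: eqP => // ->; rewrite invg1 perm1 ltnn.
move=> /reducedb_rcons[s_red ik ascent]; rewrite word_perm_rcons permM => lt_a.
rewrite kappa_rcons // [kappa q s (sigma i * tau)%g w]IHs ?invV_sigma // mul0r addr0.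
set j := (tau^-1)%g a in lt_a *.
(* If tau (i+1) = a the first weight is q - (0 - q w_(tau i)) / (0 - w_(tau i)) = 0;
   otherwise the induction hypothesis applies to tau, using the ascent at i when
   tau i = a. *)
have [ji | ji] := eqVneq j i.
  by rewrite IHs ?mul0r // -/j ji; rewrite ji sigmaL in lt_a; apply: ltn_trans lt_a.
have [jn | jn] := eqVneq j (nxt i).
  have tau_n : tau (nxt i) = a by rewrite -jn /j permKV.
  have wi : w (tau i) != 0.
    by rewrite -wa -tau_n; apply: w_gen; rewrite (inj_eq perm_inj) eq_sym nxt_neq.
  by rewrite tau_n wa !sub0r invrN mulrNN mulfK // subrr mulr0.
by rewrite IHs ?mul0r //; rewrite /sigma tpermD // eq_sym in lt_a.
Qed.

End FiniteVanishing.

Section NearInfinity.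
Variable R : realFieldType.
Implicit Types (P Q : R -> Prop) (f g : R -> R).

Definition near_infty P := exists M : R, forall t, M < `|t| -> P t.
Definition bounded_at_infty f := exists C : R, near_infty (fun t => `|f t| <= C).
Definition vanishing_at_infty f := forall e : R, 0 < e -> near_infty (fun t => `|f t| < e).

Lemma near_inftyT P : (forall t, P t) -> near_infty P.
Proof. by move=> P_all; exists 0 => t _. Qed.

Lemma near_infty2 P Q (S : R -> Prop) : (forall t, P t -> Q t -> S t) ->
  near_infty P -> near_infty Q -> near_infty S.
Proof.
move=> PQS [M1 P_M1] [M2 Q_M2]; exists (`|M1| + `|M2|) => t t_big.
have := ler_norm M1; have := ler_norm M2; have := normr_ge0 M1; have := normr_ge0 M2.
by move=> *; apply: PQS; [apply: P_M1 | apply: Q_M2]; lra.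
Qed.

Lemma bounded_near_eq f g :
  near_infty (fun t => f t = g t) -> bounded_at_infty g -> bounded_at_infty f.
Proof. by move=> fg [C g_C]; exists C; apply: near_infty2 fg g_C => t ->. Qed.

Lemma vanishing_near_eq f g :
  near_infty (fun t => f t = g t) -> vanishing_at_infty g -> vanishing_at_infty f.
Proof. by move=> fg g0 e e0; apply: near_infty2 fg (g0 e e0) => t ->. Qed.

Lemma bounded_cst c : bounded_at_infty (fun _ => c).
Proof. by exists `|c|; apply: near_inftyT. Qed.

Lemma boundedD f g : bounded_at_infty f -> bounded_at_infty g ->
  bounded_at_infty (fun t => f t + g t).
Proof.
move=> [C1 f_C1] [C2 g_C2]; exists (C1 + C2); apply: near_infty2 f_C1 g_C2 => t f_t g_t.
by apply: le_trans (ler_normD _ _) _; apply: lerD.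
Qed.

Lemma boundedN f : bounded_at_infty f -> bounded_at_infty (fun t => - f t).
Proof. by move=> [C [M f_C]]; exists C, M => t /f_C; rewrite normrN. Qed.

Lemma boundedM f g : bounded_at_infty f -> bounded_at_infty g ->
  bounded_at_infty (fun t => f t * g t).
Proof.
move=> [C1 f_C1] [C2 g_C2]; exists (C1 * C2); apply: near_infty2 f_C1 g_C2 => t f_t g_t.
by rewrite normrM ler_pM.
Qed.

Lemma vanishingD f g : vanishing_at_infty f -> vanishing_at_infty g ->
  vanishing_at_infty (fun t => f t + g t).
Proof.
move=> f0 g0 e e0; have e2 : 0 < e / 2 by rewrite divr_gt0.
apply: near_infty2 (f0 _ e2) (g0 _ e2) => t f_t g_t.
by apply: le_lt_trans (ler_normD _ _) _; rewrite [e]splitr ltrD.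
Qed.

Lemma vanishingMl f g : bounded_at_infty f -> vanishing_at_infty g ->
  vanishing_at_infty (fun t => f t * g t).
Proof.
move=> [C f_C] g0 e e0; set C' := `|C| + 1.
have C'0 : 0 < C' by rewrite /C'; have := normr_ge0 C; lra.
apply: near_infty2 f_C (g0 _ (divr_gt0 e0 C'0)) => t f_t g_t.
have f_C' : `|f t| <= C' by have := ler_norm C; rewrite /C'; lra.
rewrite normrM; apply: le_lt_trans (ler_wpM2r (normr_ge0 _) f_C') _.
by rewrite mulrC -ltr_pdivlMr.
Qed.

Lemma vanishingMr f g : vanishing_at_infty f -> bounded_at_infty g ->
  vanishing_at_infty (fun t => f t * g t).
Proof.
move=> f0 g_bd; apply: vanishing_near_eq (vanishingMl g_bd f0).
by apply: near_inftyT => t; rewrite mulrC.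
Qed.

Lemma norm_le_shift (t c : R) : `|t| <= `|t + c| + `|c|.
Proof. by have := ler_normD (t + c) (- c); rewrite normrN addrK. Qed.

Lemma bounded_homography (al be ga : R) : bounded_at_infty (fun t => (al * t + be) / (t + ga)).
Proof.
exists (2 * `|al| + 2 * `|be|), (2 * `|ga| + 1) => t t_big.
have := norm_le_shift t ga; have := normr_ge0 ga; have := normr_ge0 al; have := normr_ge0 be.
have num_le : `|al * t + be| <= `|al| * `|t| + `|be|.
  by apply: le_trans (ler_normD _ _) _; rewrite normrM.
move=> *; have den_gt0 : 0 < `|t + ga| by lra.
by rewrite normrM normfV ler_pdivrMr //; nra.
Qed.

Lemma vanishing_inv_shift (be ga : R) : vanishing_at_infty (fun t => be / (t + ga)).
Proof.
move=> e e0; exists (2 * `|ga| + `|be| / e + 1) => t t_big.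
have := norm_le_shift t ga; have := normr_ge0 ga.
have B0 : 0 <= `|be| / e by rewrite divr_ge0 // ltW.
have be_e : `|be| = `|be| / e * e by rewrite divfK // gt_eqF.
move=> *; have den_gt0 : 0 < `|t + ga| by lra.
rewrite normrM normfV ltr_pdivrMr // be_e; set B := `|be| / e in B0 t_big *.
nra.
Qed.

End NearInfinity.

Section InftyVanishing.
Variables (R : realFieldType) (k : nat) (q : R) (w : 'I_k -> R) (a : 'I_k).
Implicit Types (s : seq 'I_k) (tau : 'S_k).

Local Notation wt t := (upd w a t).

Lemma bounded_coef_upd (u v : 'I_k) : u != v ->
  bounded_at_infty (fun t => (wt t u - q * wt t v) / (wt t u - wt t v)).
Proof.
rewrite /upd => uv; have [ua | ua] := eqVneq u a.
  rewrite -ua eq_sym (negbTE uv).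
  apply: bounded_near_eq (bounded_homography 1 (- (q * w v)) (- w v)).
  by apply: near_inftyT => t; rewrite mul1r.
have [_ | _] := eqVneq v a; last exact: bounded_cst.
apply: bounded_near_eq (bounded_homography q (- w u) (- w u)).
by apply: near_inftyT => t; rewrite -mulrNN -invrN !opprB.
Qed.

Lemma vanishing_first_weight (y : R) :
  vanishing_at_infty (fun t => q - (y - q * t) / (y - t)).
Proof.
apply: vanishing_near_eq (vanishing_inv_shift ((1 - q) * y) (- y)).
exists `|y| => t t_big; have yt : y - t != 0.
  by apply: contraTneq t_big => /eqP; rewrite subr_eq0 => /eqP <-; rewrite ltxx.
have ty : t - y != 0 by rewrite -opprB oppr_eq0.
by field; rewrite yt ty.
Qed.

Lemma kappa_bounded_at_infty s tau : valid_word s ->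
  bounded_at_infty (fun t => kappa q s tau (wt t)).
Proof.
elim/last_ind: s tau => [|s i IHs] tau.
  move=> _; apply: bounded_near_eq (bounded_cst (tau == 1%g)%:R).
  by apply: near_inftyT => t; rewrite kappa_nil.
rewrite valid_word_rcons => /andP[s_valid ik].
have ne : tau i != tau (nxt i) by rewrite (inj_eq perm_inj) eq_sym nxt_neq.
apply: bounded_near_eq; first by apply: near_inftyT => t; rewrite kappa_rcons.
apply: boundedD; apply: boundedM; try exact: IHs.
- by apply: boundedD (bounded_cst q) (boundedN (bounded_coef_upd _)); rewrite eq_sym.
- exact: bounded_coef_upd.
Qed.

Lemma kappa_vanish_at_infty s tau : reducedb s ->
  (a < word_perm s ((tau^-1)%g a))%N -> vanishing_at_infty (fun t => kappa q s tau (wt t)).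
Proof.
elim/last_ind: s tau => [|s i IHs] tau.
  move=> _; rewrite perm1 => a_lt e e0; apply: near_inftyT => t.
  rewrite kappa_nil; case: eqP => [tau1|_]; last by rewrite normr0.
  by move: a_lt; rewrite tau1 invg1 perm1 ltnn.
move=> /reducedb_rcons[s_red ik ascent]; rewrite word_perm_rcons permM => a_lt.
have s_valid : valid_word s by case/andP: s_red.
apply: vanishing_near_eq; first by apply: near_inftyT => t; rewrite kappa_rcons.
apply: vanishingD; last first.
  apply: vanishingMr (IHs _ s_red _) (bounded_coef_upd _); rewrite ?invV_sigma //.
  by rewrite (inj_eq perm_inj) eq_sym nxt_neq.
set j := (tau^-1)%g a in a_lt.
have [ji | ji] := eqVneq j i.
  have tau_i : tau i = a by rewrite -ji /j permKV.
  have tau_n : tau (nxt i) != a by rewrite -tau_i (inj_eq perm_inj) nxt_neq.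
  apply: vanishingMl; first exact: kappa_bounded_at_infty.
  apply: vanishing_near_eq (vanishing_first_weight (w (tau (nxt i)))).
  by apply: near_inftyT => t; rewrite /upd tau_i eqxx (negbTE tau_n).
apply: vanishingMr; first apply: IHs => //.
  have [jn | jn] := eqVneq j (nxt i).
    by rewrite -/j jn; rewrite jn sigmaR in a_lt; apply: ltn_trans ascent.
  by rewrite -/j; rewrite /sigma tpermD // eq_sym in a_lt.
apply: boundedD (bounded_cst q) (boundedN (bounded_coef_upd _)).
by rewrite (inj_eq perm_inj) nxt_neq.
Qed.

End InftyVanishing.

Section DiagonalSubstitution.
Variables (R : comRingType) (k : nat).
Local Notation MP := {mpoly R[k]}.
Implicit Types (m n j : 'I_k) (F : MP).

Lemma mpoly_sub_rmorph_multiple (f : {rmorphism MP -> MP}) (d F : MP) :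
  (forall c, f c%:MP = c%:MP) -> (forall j, exists g, 'X_j - f 'X_j = d * g) ->
  exists G, F - f F = d * G.
Proof.
move=> fC fX; pose mult F := exists G, F - f F = d * G.
have multD F1 F2 : mult F1 -> mult F2 -> mult (F1 + F2).
  by move=> [G1 e1] [G2 e2]; exists (G1 + G2); rewrite rmorphD mulrDr -e1 -e2; ring.
have multM F1 F2 : mult F1 -> mult F2 -> mult (F1 * F2).
  move=> [G1 e1] [G2 e2]; exists (G1 * F2 + f F1 * G2).
  by rewrite rmorphM mulrDr mulrA -e1 mulrCA -e2; ring.
have multC c : mult c%:MP by exists 0; rewrite fC subrr mulr0.
suff : mult F by [].
rewrite [F]mpolyE; elim/big_ind: _ => [|F1 F2|mon _]; [by rewrite -mpolyC0 | exact: multD |].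
rewrite -mul_mpolyC; apply: (multM) => //; rewrite mpolyXE_id.
elim/big_ind: _ => [|F1 F2|j _]; [by rewrite -mpolyC1 | exact: multM |].
by elim: (mon j) => [|e IHe]; rewrite ?expr0 -?mpolyC1 // exprS; apply: (multM).
Qed.

Definition diag_subst m n : MP -> MP :=
  comp_mpoly [tuple (if j == m then 'X_n else 'X_j : MP) | j < k].

HB.instance Definition _ m n := GRing.RMorphism.on (diag_subst m n).

Lemma diag_substX m n j : diag_subst m n 'X_j = 'X_(if j == m then n else j).
Proof. by rewrite /diag_subst comp_mpolyXU -tnth_nth tnth_mktuple; case: eqP. Qed.

Lemma diag_substC m n c : diag_subst m n c%:MP = c%:MP.
Proof. exact: comp_mpolyC. Qed.

Lemma diag_subst_tperm m n j : diag_subst m n 'X_(tperm m n j) = diag_subst m n 'X_j.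
Proof.
by rewrite !diag_substX; case: tpermP => [->|->|/eqP/negbTE-> _]; rewrite ?eqxx ?if_same.
Qed.

Lemma diag_subst_eq0 m n F : diag_subst m n F = 0 -> exists G, F = ('X_m - 'X_n) * G.
Proof.
move=> F0; have diag_X j : exists g, 'X_j - diag_subst m n 'X_j = ('X_m - 'X_n) * g.
  rewrite diag_substX; case: eqP => [->|_]; first by exists 1; rewrite mulr1.
  by exists 0; rewrite subrr mulr0.
have [G FG] := mpoly_sub_rmorph_multiple F (diag_substC m n) diag_X.
by exists G; rewrite -FG /= F0 subr0.
Qed.

Lemma subX_neq0 m n : m != n -> ('X_m - 'X_n : MP) != 0.
Proof.
move=> mn; apply/eqP => /(congr1 (meval (fun j => (j == m)%:R))).
by rewrite mevalB !mevalXU eqxx eq_sym (negbTE mn) meval0 subr0 => /eqP; rewrite oner_eq0.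
Qed.

Lemma diag_subst_subX_eq0 m n (x y : 'I_k) : m != n -> x != y ->
  diag_subst m n ('X_y - 'X_x) = 0 -> tperm m n = tperm y x.
Proof.
move=> mn xy; rewrite rmorphB /= !diag_substX => /eqP; apply: contraTeq => t_ne.
apply: subX_neq0; move: t_ne xy.
case: (eqVneq y m) => [->|ym]; case: (eqVneq x m) => [->|xm] t_ne xy.
- by [].
- by apply: contraNneq t_ne => ->.
- by apply: contraNneq t_ne => yn; rewrite yn tpermC.
- by rewrite eq_sym.
Qed.

End DiagonalSubstitution.

Section Numerators.
Variables (R : fieldType) (k : nat) (q : R).
Local Notation MP := {mpoly R[k]}.
Implicit Types (s : seq 'I_k) (tau rho : 'S_k) (P : 'S_k -> MP).

Definition vdm_mpoly : MP := \prod_(i : 'I_k) \prod_(j : 'I_k | (i < j)%N) ('X_j - 'X_i).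

Lemma vdm_mpolyE w : vdm_mpoly.@[w] = vdm w.
Proof.
rewrite /vdm_mpoly /vdm rmorph_prod; apply: eq_bigr => i _.
by rewrite rmorph_prod; apply: eq_bigr => j _; rewrite rmorphB /= !mevalXU.
Qed.

Lemma diag_subst_vdm m n : m != n -> diag_subst m n vdm_mpoly = 0.
Proof.
move=> mn; have vdm_factor (a b : 'I_k) : (a < b)%N ->
    diag_subst m n ('X_b - 'X_a : MP) = 0 -> diag_subst m n vdm_mpoly = 0.
  move=> ab factor0; rewrite rmorph_prod (bigD1 a) //= rmorph_prod (bigD1 b) //=.
  by rewrite factor0 !mul0r.
have diag_mn : diag_subst m n ('X_n - 'X_m : MP) = 0.
  by rewrite rmorphB /= !diag_substX eqxx if_same subrr.
case: (ltngtP m n) => [lt_mn | lt_nm | /val_inj mn_eq]; last by rewrite mn_eq eqxx in mn.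
- exact: vdm_factor lt_mn diag_mn.
- by apply: vdm_factor lt_nm _; rewrite -opprB rmorphN /= diag_mn oppr0.
Qed.

Definition numerators s P := forall rho w, generic w -> vdm w * kappa q s rho w = (P rho).@[w].

(* On the diagonal w_m = w_n the operators t_rho and t_(rho * (m n)) agree,
   so their poles along w_m = w_n can cancel. *)
Definition cancel_on_diagonals P :=
  forall rho m n, m != n -> diag_subst m n (P rho + P (rho * tperm m n)%g) = 0.

Lemma numerators_nil : numerators [::] (fun rho => if rho == 1%g then vdm_mpoly else 0).
Proof.
move=> rho w _; rewrite kappa_nil; case: eqP => _; first by rewrite mulr1 vdm_mpolyE.
by rewrite mulr0 meval0.
Qed.

Lemma cancel_on_diagonals_nil :
  cancel_on_diagonals (fun rho => if rho == 1%g then vdm_mpoly else 0).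
Proof.
move=> rho m n mn; have t_ne1 : tperm m n != 1%g.
  by apply: contra mn => /eqP/(congr1 (fun p : 'S_k => p m)); rewrite tpermL perm1 => ->.
have [-> | rho_ne1] := eqVneq rho 1%g; first by rewrite mul1g (negbTE t_ne1) addr0 diag_subst_vdm.
have [_ | _] := eqVneq (rho * tperm m n)%g 1%g; first by rewrite add0r diag_subst_vdm.
by rewrite addr0 rmorph0.
Qed.

Section NumeratorStep.
Variables (s : seq 'I_k) (i : 'I_k) (P G : 'S_k -> MP).
Hypothesis ik : (i.+1 < k)%N.
Hypothesis PG :
  forall tau, P tau + P (sigma i * tau)%g = ('X_(tau (nxt i)) - 'X_(tau i)) * G tau.

(* Write X, Y for w (tau i), w (tau (i+1)) and a, b, g for the values at w of
   P tau, P (sigma_i tau), G tau. Then PG reads a + b = (Y - X) g, and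
   vdm w * kappa (rcons s i) tau w simplifies to (q - 1) Y g + b. *)
Definition next_numerator tau : MP :=
  (q - 1)%:MP * 'X_(tau (nxt i)) * G tau + P (sigma i * tau)%g.

Lemma numerators_rcons : numerators s P -> numerators (rcons s i) next_numerator.
Proof.
move=> P_num tau w w_gen.
have ne : tau i != tau (nxt i) by rewrite (inj_eq perm_inj) eq_sym nxt_neq.
have YX : w (tau (nxt i)) - w (tau i) != 0 by rewrite subr_eq0 w_gen // eq_sym.
have XY : w (tau i) - w (tau (nxt i)) != 0 by rewrite subr_eq0 w_gen.
rewrite kappa_rcons // mulrDr !mulrA !P_num // mevalD !mevalM mevalC mevalXU.
have := congr1 (meval w) (PG tau); rewrite mevalD mevalM mevalB !mevalXU.
set a := (P tau).@[w]; set b := (P _).@[w]; set g := (G tau).@[w] => /(canRL (addrK b)) ->.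
by field; rewrite YX XY.
Qed.

Lemma G_sigma tau : G (sigma i * tau)%g = - G tau.
Proof.
have ne : tau i != tau (nxt i) by rewrite (inj_eq perm_inj) eq_sym nxt_neq.
have := PG (sigma i * tau)%g; rewrite mulgA sigmaK mul1g !permM sigmaL sigmaR addrC PG.
rewrite -opprB mulNr => /(canRL (@opprK _)) /eqP; rewrite -mulrN -subr_eq0 -mulrBr.
by rewrite mulf_eq0 (negbTE (subX_neq0 R ne)) opprK addrC addr_eq0 => /eqP.
Qed.

Lemma next_numerator_cancel_swap rho m n :
  (rho * tperm m n = sigma i * rho)%g ->
  diag_subst m n ('X_(rho (nxt i)) - 'X_(rho i) : MP) = 0 ->
  diag_subst m n (next_numerator rho + next_numerator (rho * tperm m n)%g) = 0.
Proof.
move=> -> diag0; rewrite /next_numerator mulgA sigmaK mul1g G_sigma permM sigmaR.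
have -> : (q - 1)%:MP * 'X_(rho (nxt i)) * G rho + P (sigma i * rho)%g +
          ((q - 1)%:MP * 'X_(rho i) * - G rho + P rho) =
          (q - 1)%:MP * (('X_(rho (nxt i)) - 'X_(rho i)) * G rho) + (P rho + P (sigma i * rho)%g).
  by ring.
by rewrite PG rmorphD !rmorphM /= diag0 !mul0r mulr0 addr0.
Qed.

Lemma next_numerator_cancel_other rho m n : cancel_on_diagonals P -> m != n ->
  diag_subst m n ('X_(rho (nxt i)) - 'X_(rho i) : MP) != 0 ->
  diag_subst m n (next_numerator rho + next_numerator (rho * tperm m n)%g) = 0.
Proof.
move=> P_cancel mn D_ne0; set t := tperm m n.
have diag_t j : diag_subst m n ('X_(t j) : MP) = diag_subst m n 'X_j := diag_subst_tperm R m n j.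
have G_cancel : diag_subst m n (G rho + G (rho * t)%g) = 0.
  have : diag_subst m n (('X_(rho (nxt i)) - 'X_(rho i)) * (G rho + G (rho * t)%g)) = 0.
    rewrite mulrDr -PG rmorphD /=.
    have -> : diag_subst m n (('X_(rho (nxt i)) - 'X_(rho i)) * G (rho * t)%g) =
              diag_subst m n (P (rho * t)%g + P (sigma i * (rho * t))%g).
      by rewrite PG !rmorphM !rmorphB /= !permM !diag_t.
    by rewrite -rmorphD addrACA rmorphD /= P_cancel // mulgA P_cancel // addr0.
  by rewrite rmorphM /= => /eqP; rewrite mulf_eq0 (negbTE D_ne0) => /eqP.
have -> : next_numerator rho + next_numerator (rho * t)%g =
    (q - 1)%:MP * 'X_(rho (nxt i)) * (G rho + G (rho * t)%g) +
    (P (sigma i * rho)%g + P (sigma i * rho * t)%g) +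
    (q - 1)%:MP * ('X_(t (rho (nxt i))) - 'X_(rho (nxt i))) * G (rho * t)%g.
  by rewrite /next_numerator permM mulgA; ring.
have diag_ty : diag_subst m n ('X_(t (rho (nxt i))) - 'X_(rho (nxt i)) : MP) = 0.
  by rewrite rmorphB /= diag_t subrr.
rewrite 2!rmorphD /= P_cancel // !rmorphM /= G_cancel diag_ty.
by rewrite !(mulr0, mul0r, addr0).
Qed.

Lemma next_numerator_cancel : cancel_on_diagonals P -> cancel_on_diagonals next_numerator.
Proof.
move=> P_cancel rho m n mn.
have xy : rho i != rho (nxt i) by rewrite (inj_eq perm_inj) eq_sym nxt_neq.
have [D0 | D_ne0] := eqVneq (diag_subst m n ('X_(rho (nxt i)) - 'X_(rho i) : MP)) 0.
  apply: next_numerator_cancel_swap (D0).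
  by rewrite sigma_conj (diag_subst_subX_eq0 mn xy D0).
exact: next_numerator_cancel_other.
Qed.

End NumeratorStep.

Lemma exists_numerators s : valid_word s -> exists P, numerators s P /\ cancel_on_diagonals P.
Proof.
elim/last_ind: s => [_|s i IHs].
  by eexists; split; [exact: numerators_nil | exact: cancel_on_diagonals_nil].
rewrite valid_word_rcons => /andP[/IHs[P [P_num P_cancel]] ik].
have PG tau : exists g, P tau + P (sigma i * tau)%g = ('X_(tau (nxt i)) - 'X_(tau i)) * g.
  by apply: diag_subst_eq0; rewrite sigma_conj P_cancel // (inj_eq perm_inj) nxt_neq.
have [G {}PG] := fin_all_exists PG.
exists (next_numerator i P G); split; first exact: numerators_rcons ik PG P_num.
exact: next_numerator_cancel ik PG P_cancel.
Qed.

End Numerators.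

Theorem proposition3p3 (R : realFieldType) (q : R) (hq : 0 < q < 1)
  (k : nat) (pi rho : 'S_k) (s : seq 'I_k) (hs : reduced_word s pi) :
  [/\
   (* (1) prod_{i<j}(w_j - w_i) kappa is a polynomial *)
   exists P : {mpoly R[k]},
     forall w : 'I_k -> R, generic w -> vdm w * kappa q s rho w = P.@[w],
   (* (2) vanishing on w_a = z, w_b = q z *)
   forall a b : 'I_k, (a < b)%N -> ((rho^-1)%g b < (rho^-1)%g a)%N ->
     forall w : 'I_k -> R, generic w -> w b = q * w a -> kappa q s rho w = 0,
   (* (3a) vanishing at w_a = 0 *)
   forall a : 'I_k, (pi ((rho^-1)%g a) < a)%N ->
     forall w : 'I_k -> R, generic w -> w a = 0 -> kappa q s rho w = 0 &
   (* (3b) vanishing as w_a -> infinity *)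
   forall a : 'I_k, (a < pi ((rho^-1)%g a))%N ->
     forall w : 'I_k -> R, (forall i j, i != a -> j != a -> i != j -> w i != w j) ->
     forall e : R, 0 < e -> exists M : R, forall t : R, M < `|t| ->
       `|kappa q s rho (upd w a t)| < e].
Proof.
have s_red := reduced_word_reducedb hs; have [s_valid <- _] := hs.
split.
- have [P [P_num _]] := exists_numerators q s_valid.
  by exists (P rho) => w w_gen; apply: P_num.
- by move=> a b ab rho_ab w _ wb; apply: kappa_vanish_qline ab rho_ab wb.
- by move=> a a_gt w w_gen wa; apply: kappa_vanish_zero s_red w_gen a_gt wa.
- by move=> a a_lt w _; apply: kappa_vanish_at_infty s_red a_lt.
Qed.
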